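(* In the standing setting, for every $a'\in P'$ we have $g'(\downarrow\{a'\})=\downarrow f^{-1}(a')$, where $\downarrow\{a'\}=\{b'\in P': b'\preceq' a'\}\in Q'$ and $\downarrow f^{-1}(a')=\{b\in P:\ \exists a\in f^{-1}(a') \text{ with } b\preceq a\}$.
   Context: Standing setting: $(P,\preceq)$ is a finite poset with a bottom and a top element; $f:P\to P'$ is a surjective map onto $P'=f(P)$; $f^{-1}(a')=\{a\in P: f(a)=a'\}$; the relation $\preceq'$ on $P'$ is defined by $b'\preceq' a'$ iff there exist $a\in f^{-1}(a')$, $b\in f^{-1}(b')$ with $b\preceq a$. Assume the three conditions: (D) for all $a',b'\in P'$ with $b'\preceq' a'$ and every $a\in f^{-1}(a')$ there is $b\in f^{-1}(b')$ with $b\preceq a$; (U) for all $a',b'\in P'$ with $b'\preceq' a'$ and every $b\in f^{-1}(b')$ there is $a\in f^{-1}(a')$ with $b\preceq a$; (S) for all $a,b,c\in P$, if $c\preceq b\preceq a$ and $f(c)=f(a)$ then $f(b)=f(a)$. (Then $(P',\preceq')$ is a poset.) A down-set of a poset is a subset $A$ such that $a\in A$ and $b\preceq a$ imply $b\in A$. $Q$ is the set of nonempty down-sets of $(P,\preceq)$ and $Q'$ the set of nonempty down-sets of $(P',\preceq')$, each ordered by inclusion. $g:2^P\to 2^{P'}$ is $g(A)=\{f(a):a\in A\}$. For $A'\in Q'$, $g^{-1}(A')=\{A\in Q: g(A)=A'\}$ and $g'(A')=\bigcup_{A\in g^{-1}(A')}A$. *)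

From HB Require Import structures.
From mathcomp Require Import all_boot all_order.
Set Implicit Arguments. Unset Strict Implicit. Unset Printing Implicit Defensive.
Import Order.Theory.
Local Open Scope order_scope.

Section Defs.
Context {d : Order.disp_t} {P : finTBPOrderType d} {P' : finType}.
Variable f : P -> P'.

Definition lep' (b' a' : P') : bool :=
  [exists a : P, exists b : P, [&& f a == a', f b == b' & b <= a]].

Definition is_downset (A : {set P}) : bool :=
  [forall a : P, forall b : P, (a \in A) && (b <= a) ==> (b \in A)].
Definition is_downset' (A' : {set P'}) : bool :=
  [forall a' : P', forall b' : P', (a' \in A') && lep' b' a' ==> (b' \in A')].

Definition inQ (A : {set P}) : bool := is_downset A && (A != set0).
Definition inQ' (A' : {set P'}) : bool := is_downset' A' && (A' != set0).

Definition g (A : {set P}) : {set P'} := f @: A.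

Definition g_pre (A' : {set P'}) : {set {set P}} :=
  [set A : {set P} | inQ A && (g A == A')].

Definition g' (A' : {set P'}) : {set P} := \bigcup_(A in g_pre A') A.

Definition down' (a' : P') : {set P'} := [set b' : P' | lep' b' a'].
Definition down_fiber (a' : P') : {set P} :=
  [set b : P | [exists a : P, (f a == a') && (b <= a)]].
End Defs.

From HB Require Import structures.
From mathcomp Require Import all_boot all_order.
Import Order.Theory.
Local Open Scope order_scope.

(* Proof idea.  g'(A') is the union of all nonempty down-sets A of P whose
   image under f is A'; so it equals any such A that contains all the others,
   i.e. the greatest element of g^{-1}(A').  For A' = down{a'} the candidate
   is D := down f^{-1}(a'):
   - D is a down-set, nonempty because f is surjective;
   - f(D) = down{a'} holds by the very definition of the induced order;
   - every A with f(A) = down{a'} lies in D: for b in A we have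
     f(b) <=' a', and condition (U) lifts this to some a in f^{-1}(a')
     above b.
   Only surjectivity and (U) are needed. *)

Set Implicit Arguments.
Unset Strict Implicit.
Unset Printing Implicit Defensive.

Section GreatestPreimage.
Context {d : Order.disp_t} {P : finTBPOrderType d} {P' : finType}.
Variable f : P -> P'.

Lemma g'_greatest (A' : {set P'}) (X : {set P}) :
  X \in g_pre f A' -> (forall A, A \in g_pre f A' -> A \subset X) ->
  g' f A' = X.
Proof.
move=> XA' maxX; apply/eqP; rewrite eqEsubset; apply/andP; split.
- by apply/bigcupsP => A /maxX.
- exact: bigcup_sup XA'.
Qed.

Lemma down_fiber_downset (a' : P') : is_downset (down_fiber f a').
Proof.
apply/forallP => x; apply/forallP => y; apply/implyP => /andP [].
rewrite !inE => /existsP [a /andP [fa xa]] yx.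
by apply/existsP; exists a; rewrite fa (le_trans yx xa).
Qed.

Lemma down_fiber_neq0 (a' : P') (a : P) : f a = a' -> down_fiber f a' != set0.
Proof.
move=> fa; apply/set0Pn; exists a; rewrite inE.
by apply/existsP; exists a; rewrite fa eqxx lexx.
Qed.

Lemma g_down_fiber (a' : P') : g f (down_fiber f a') = down' f a'.
Proof.
apply/setP => y'; rewrite inE; apply/imsetP/idP.
- case=> y; rewrite inE => /existsP [a /andP [fa ya]] ->.
  by apply/existsP; exists a; apply/existsP; exists y; rewrite fa !eqxx ya.
- case/existsP=> a /existsP [y /and3P [fa /eqP <- ya]].
  by exists y => //; rewrite inE; apply/existsP; exists a; rewrite fa ya.
Qed.

Lemma sub_down_fiber (a' : P') (A : {set P}) :
  (forall b, lep' f (f b) a' -> exists a, f a = a' /\ b <= a) ->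
  g f A \subset down' f a' -> A \subset down_fiber f a'.
Proof.
move=> HU gA; apply/subsetP => b bA.
have : f b \in down' f a' by apply: (subsetP gA); apply: imset_f.
rewrite inE => /HU [a [fa ba]].
by rewrite inE; apply/existsP; exists a; rewrite fa eqxx ba.
Qed.

End GreatestPreimage.

Theorem lemma12 (d : Order.disp_t) (P : finTBPOrderType d) (P' : finType)
  (f : P -> P')
  (f_surj : forall a' : P', exists a : P, f a = a')
  (HD : forall a' b' : P', lep' f b' a' ->
        forall a : P, f a = a' -> exists b : P, f b = b' /\ b <= a)
  (HU : forall a' b' : P', lep' f b' a' ->
        forall b : P, f b = b' -> exists a : P, f a = a' /\ b <= a)
  (HS : forall a b c : P, c <= b -> b <= a -> f c = f a -> f b = f a) :
  forall a' : P', g' f (down' f a') = down_fiber f a'.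
Proof.
move=> a'; have [a fa] := f_surj a'.
apply: g'_greatest => [|A].
- rewrite inE g_down_fiber eqxx andbT /inQ down_fiber_downset.
  exact: down_fiber_neq0 fa.
- rewrite inE => /andP [_ /eqP gA].
  by apply: sub_down_fiber; [exact: (fun b h => HU a' (f b) h b erefl) | rewrite gA].
Qed.
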